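(* The UCB-LP and the Compact LP defined in the context have the same optimal objective value. Furthermore, the optimal values of the dual variables associated with the resource constraints (the constraints indexed by $k\in\mathcal K$) in the UCB-LP and in the Compact LP are the same.
   Context: Let $\mathcal N=\{1,\dots,N\}$ and $\mathcal K=\{1,\dots,K\}$. Data: $\hat v_i>0$, $r_i\in[0,1]$, $a(i,k)\in[0,1]$ for $i\in\mathcal N,k\in\mathcal K$, $c(k)>0$, $\omega\in[0,1)$, and $\varepsilon_i=\varepsilon(n_i)=(\sqrt N+1)\Psi/\sqrt{n_i}$ with positive integers $n_i$ and a constant $\Psi>0$. UCB-LP (variables $y(S)$, $S\subseteq\mathcal N$): maximize $\sum_{S\subseteq\mathcal N}\sum_{i\in S}r_i\Big(\frac{\hat v_i}{1+\sum_{j\in S}\hat v_j}+\varepsilon_i\Big)y(S)$ subject to $\sum_{S}\sum_{i\in S}a(i,k)\Big(\frac{\hat v_i}{1+\sum_{j\in S}\hat v_j}-\varepsilon_i\Big)y(S)\le(1-\omega)c(k)$ for all $k$, $\sum_S y(S)=1$, $y(S)\ge0$. Compact LP (variables $x_0\in\mathbb R$, $x\in\mathbb R_+^N$, $y\in\mathbb R_+^{N\times N}$): maximize $\sum_{i\in\mathcal N}r_i\big[(\hat v_i+\varepsilon_i)x_i+\varepsilon_i\sum_{j\in\mathcal N}\hat v_jy_{ij}\big]$ subject to $\sum_{i}a(i,k)\big[(\hat v_i-\varepsilon_i)x_i-\varepsilon_i\sum_j\hat v_jy_{ij}\big]\le(1-\omega)c(k)$ for all $k$; $x_0+\sum_i\hat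 v_ix_i=1$; $x_i\le x_0$ for all $i$; $y_{ij}\le\min\{x_i,x_j\}$ for all $i,j$. *)

(* an abstract real closed field R (needed for Num.sqrt). *)
From mathcomp Require Import all_boot all_order all_algebra.
Set Implicit Arguments. Unset Strict Implicit. Unset Printing Implicit Defensive.
Import Order.TTheory GRing.Theory Num.Theory.
Local Open Scope ring_scope.

Definition eps_of (R : rcfType) (N : nat) (Psi : R) (m : nat) : R :=
  (Num.sqrt (N%:R) + 1) * Psi / Num.sqrt (m%:R).

Definition Vsum (R : rcfType) (N : nat) (vh : 'I_N -> R) (S : {set 'I_N}) : R :=
  \sum_(j in S) vh j.

Definition ucb_obj (R : rcfType) (N : nat) (vh r eps : 'I_N -> R)
  (y : {set 'I_N} -> R) : R :=
  \sum_(S : {set 'I_N}) \sum_(i in S) r i * (vh i / (1 + Vsum vh S) + eps i) * y S.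

Definition ucb_res_coef (R : rcfType) (N K : nat) (vh eps : 'I_N -> R)
  (a : 'I_N -> 'I_K -> R) (k : 'I_K) (S : {set 'I_N}) : R :=
  \sum_(i in S) a i k * (vh i / (1 + Vsum vh S) - eps i).

Definition ucb_obj_coef (R : rcfType) (N : nat) (vh r eps : 'I_N -> R)
  (S : {set 'I_N}) : R :=
  \sum_(i in S) r i * (vh i / (1 + Vsum vh S) + eps i).

Definition ucb_feasible (R : rcfType) (N K : nat) (vh eps : 'I_N -> R)
  (a : 'I_N -> 'I_K -> R) (c : 'I_K -> R) (om : R) (y : {set 'I_N} -> R) : Prop :=
  (forall k : 'I_K,
     \sum_(S : {set 'I_N}) \sum_(i in S) a i k * (vh i / (1 + Vsum vh S) - eps i) * y S
       <= (1 - om) * c k)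
  /\ \sum_(S : {set 'I_N}) y S = 1
  /\ (forall S, 0 <= y S).

Definition ucb_opt_value (R : rcfType) (N K : nat) (vh r eps : 'I_N -> R)
  (a : 'I_N -> 'I_K -> R) (c : 'I_K -> R) (om : R) (v : R) : Prop :=
  (exists y, ucb_feasible vh eps a c om y /\ ucb_obj vh r eps y = v)
  /\ (forall y, ucb_feasible vh eps a c om y -> ucb_obj vh r eps y <= v).

Definition cmp_obj (R : rcfType) (N : nat) (vh r eps : 'I_N -> R)
  (x0 : R) (x : 'I_N -> R) (y : 'I_N -> 'I_N -> R) : R :=
  \sum_(i < N) r i * ((vh i + eps i) * x i + eps i * \sum_(j < N) vh j * y i j).

Definition cmp_feasible (R : rcfType) (N K : nat) (vh eps : 'I_N -> R)
  (a : 'I_N -> 'I_K -> R) (c : 'I_K -> R) (om : R)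
  (x0 : R) (x : 'I_N -> R) (y : 'I_N -> 'I_N -> R) : Prop :=
  (forall i, 0 <= x i)
  /\ (forall i j, 0 <= y i j)
  /\ (forall k : 'I_K,
        \sum_(i < N) a i k * ((vh i - eps i) * x i - eps i * \sum_(j < N) vh j * y i j)
          <= (1 - om) * c k)
  /\ x0 + \sum_(i < N) vh i * x i = 1
  /\ (forall i, x i <= x0)
  /\ (forall i j, y i j <= Num.min (x i) (x j)).

Definition cmp_opt_value (R : rcfType) (N K : nat) (vh r eps : 'I_N -> R)
  (a : 'I_N -> 'I_K -> R) (c : 'I_K -> R) (om : R) (v : R) : Prop :=
  (exists x0 x y, cmp_feasible vh eps a c om x0 x y /\ cmp_obj vh r eps x0 x y = v)
  /\ (forall x0 x y, cmp_feasible vh eps a c om x0 x y -> cmp_obj vh r eps x0 x y <= v).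

(* ---------------- Dual of the UCB-LP ----------------
   lam k >= 0 : dual of the k-th resource constraint;
   mu (free)  : dual of sum_S y(S) = 1. *)
Definition ucb_dual_obj (R : rcfType) (K : nat) (c : 'I_K -> R) (om : R)
  (lam : 'I_K -> R) (mu : R) : R :=
  \sum_(k < K) lam k * ((1 - om) * c k) + mu.

Definition ucb_dual_feasible (R : rcfType) (N K : nat) (vh r eps : 'I_N -> R)
  (a : 'I_N -> 'I_K -> R) (lam : 'I_K -> R) (mu : R) : Prop :=
  (forall k, 0 <= lam k)
  /\ (forall S : {set 'I_N},
        \sum_(k < K) lam k * ucb_res_coef vh eps a k S + mu >= ucb_obj_coef vh r eps S).

Definition ucb_dual_optimal (R : rcfType) (N K : nat) (vh r eps : 'I_N -> R)
  (a : 'I_N -> 'I_K -> R) (c : 'I_K -> R) (om : R) (lam : 'I_K -> R) (mu : R) : Prop :=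
  ucb_dual_feasible vh r eps a lam mu
  /\ (forall lam' mu', ucb_dual_feasible vh r eps a lam' mu' ->
        ucb_dual_obj c om lam mu <= ucb_dual_obj c om lam' mu').

(* ---------------- Dual of the Compact LP ----------------
   lam k >= 0   : resource constraint k;
   mu (free)    : x0 + sum_i vh_i x_i = 1;
   al i >= 0    : x_i <= x0;
   be i j >= 0  : y_ij <= x_i;   ga i j >= 0 : y_ij <= x_j
   (the constraint y_ij <= min{x_i,x_j} written as these two linear constraints).
   Dual constraints come from the columns x0 (free), x_i >= 0, y_ij >= 0. *)
Definition cmp_dual_obj (R : rcfType) (K : nat) (c : 'I_K -> R) (om : R)
  (lam : 'I_K -> R) (mu : R) : R :=
  \sum_(k < K) lam k * ((1 - om) * c k) + mu.

Definition cmp_dual_feasible (R : rcfType) (N K : nat) (vh r eps : 'I_N -> R)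
  (a : 'I_N -> 'I_K -> R) (lam : 'I_K -> R) (mu : R) (al : 'I_N -> R)
  (be ga : 'I_N -> 'I_N -> R) : Prop :=
  (forall k, 0 <= lam k)
  /\ (forall i, 0 <= al i)
  /\ (forall i j, 0 <= be i j)
  /\ (forall i j, 0 <= ga i j)
  /\ mu - \sum_(i < N) al i = 0
  /\ (forall i : 'I_N,
        \sum_(k < K) lam k * (a i k * (vh i - eps i)) + mu * vh i + al i
          - \sum_(j < N) be i j - \sum_(j < N) ga j i
        >= r i * (vh i + eps i))
  /\ (forall i j : 'I_N,
        - \sum_(k < K) lam k * (a i k * (eps i * vh j)) + be i j + ga i j
        >= r i * (eps i * vh j)).

Definition cmp_dual_optimal (R : rcfType) (N K : nat) (vh r eps : 'I_N -> R)
  (a : 'I_N -> 'I_K -> R) (c : 'I_K -> R) (om : R) (lam : 'I_K -> R) (mu : R)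
  (al : 'I_N -> R) (be ga : 'I_N -> 'I_N -> R) : Prop :=
  cmp_dual_feasible vh r eps a lam mu al be ga
  /\ (forall lam' mu' al' be' ga', cmp_dual_feasible vh r eps a lam' mu' al' be' ga' ->
        cmp_dual_obj c om lam mu <= cmp_dual_obj c om lam' mu').

From mathcomp Require Import all_boot all_order all_algebra.
From mathcomp Require Import ring lra.
Set Implicit Arguments. Unset Strict Implicit. Unset Printing Implicit Defensive.
Import Order.TTheory GRing.Theory Num.Theory.
Local Open Scope ring_scope.

Lemma sum_indicator (R : pzSemiRingType) (I : finType) (i0 : I) (F : I -> R) :
  \sum_i (i == i0)%:R * F i = F i0.
Proof. by rewrite (bigD1 i0) //= eqxx mul1r big1 ?addr0 // => i /negbTE ->; rewrite mul0r. Qed.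

Lemma sum_indicatorr (R : comPzSemiRingType) (I : finType) (i0 : I) (F : I -> R) :
  \sum_i F i * (i0 == i)%:R = F i0.
Proof. by rewrite -(sum_indicator i0); apply: eq_bigr => i _; rewrite mulrC eq_sym. Qed.

Lemma sum_indicatorN (R : pzRingType) (I : finType) (i0 : I) (F : I -> R) :
  \sum_i - (i == i0)%:R * F i = - F i0.
Proof. by rewrite -(sum_indicator i0) -sumrN; apply: eq_bigr => i _; rewrite mulNr. Qed.

Lemma sum_indicatorNr (R : comPzRingType) (I : finType) (i0 : I) (F : I -> R) :
  \sum_i F i * - (i0 == i)%:R = - F i0.
Proof. by rewrite -(sum_indicatorr i0) -sumrN; apply: eq_bigr => i _; rewrite mulrN. Qed.

Section OneDimensional.
Variable R : realFieldType.

Lemma exists_between (Ls Us : seq R) :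
  {in Ls & Us, forall l u, l <= u} ->
  exists t, {in Ls, forall l, l <= t} /\ {in Us, forall u, t <= u}.
Proof.
move=> leLU; exists (\big[Num.min / \big[Num.max/0]_(l <- Ls) l]_(u <- Us) u); split.
  move=> l Ll; rewrite big_seq; apply: le_bigmin => [|u Uu]; last exact: leLU.
  exact: le_bigmax_seq.
by move=> u Uu; apply: ge_bigmin_seq.
Qed.

Definition scalar_sat (s : seq (R * R)) (t : R) := all (fun p => p.1 * t <= p.2) s.

Lemma scalar_sat_max (s : seq (R * R)) (t0 M : R) :
  scalar_sat s t0 -> (forall t, scalar_sat s t -> t <= M) ->
  exists2 tm, scalar_sat s tm & forall t, scalar_sat s t -> t <= tm.
Proof.
move=> /allP s_t0 ubM.
have le_div t (p : R * R) : 0 < p.1 -> (p.1 * t <= p.2) = (t <= p.2 / p.1).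
  by move=> p1_gt0; rewrite ler_pdivlMr // mulrC.
pose tm := \big[Num.min/M]_(p <- s | 0 < p.1) (p.2 / p.1).
have le_tm t : scalar_sat s t -> t <= tm.
  move=> /allP s_t; rewrite /tm big_seq_cond; apply: le_bigmin => [|p /andP[sp p1_gt0]].
    by apply: ubM; apply/allP.
  by rewrite -le_div //; apply: s_t.
exists tm => //; apply/allP => p sp; have t0p := s_t0 p sp.
have [p1_gt0|p1_le0] := ltP 0 p.1.
  by rewrite le_div //; apply: ge_bigmin_seq.
apply: le_trans t0p; rewrite ler_wnM2l //; apply: le_tm; exact/allP.
Qed.

End OneDimensional.

Section FourierMotzkin.
Variables (R : realFieldType) (T C : finType) (A : C -> T -> R) (B : C -> R).

Definition lp_feasible (x : T -> R) := forall c, \sum_t A c t * x t <= B c.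

Implicit Types (l p q : {ffun C -> R}) (s : seq {ffun C -> R}) (x y : T -> R).

Definition row_coef l t := \sum_c l c * A c t.
Definition row_rhs l := \sum_c l c * B c.
Definition row_lhs l x := \sum_t row_coef l t * x t.
Definition row_sat x l := row_lhs l x <= row_rhs l.

Definition elim_comb t p q : {ffun C -> R} :=
  [ffun c => row_coef p t * q c - row_coef q t * p c].

Definition fm_elim t s :=
  [seq l <- s | row_coef l t == 0] ++
  [seq elim_comb t p q | p <- [seq p <- s | 0 < row_coef p t],
                         q <- [seq q <- s | row_coef q t < 0]].

Lemma sum_elim_comb t p q (F : C -> R) :
  \sum_c elim_comb t p q c * F c =
  row_coef p t * \sum_c q c * F c - row_coef q t * \sum_c p c * F c.
Proof.
rewrite !mulr_sumr -sumrB; apply: eq_bigr => c _; rewrite ffunE; ring.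
Qed.

Lemma row_coef_elim_comb t p q i :
  row_coef (elim_comb t p q) i = row_coef p t * row_coef q i - row_coef q t * row_coef p i.
Proof. exact: sum_elim_comb. Qed.

Lemma row_rhs_elim_comb t p q :
  row_rhs (elim_comb t p q) = row_coef p t * row_rhs q - row_coef q t * row_rhs p.
Proof. exact: sum_elim_comb. Qed.

Lemma row_lhs_elim_comb t p q x :
  row_lhs (elim_comb t p q) x = row_coef p t * row_lhs q x - row_coef q t * row_lhs p x.
Proof.
rewrite /row_lhs !mulr_sumr -sumrB; apply: eq_bigr => i _.
rewrite row_coef_elim_comb; ring.
Qed.

Definition upd x t u : T -> R := fun i => if i == t then u else x i.

Lemma row_lhs_upd l x t u :
  row_lhs l (upd x t u) = row_lhs l x + row_coef l t * (u - x t).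
Proof.
rewrite /row_lhs /upd (bigD1 t) //= [in RHS](bigD1 t) //= eqxx.
rewrite (eq_bigr (fun i => row_coef l i * x i)) => [|i /negbTE -> //]; ring.
Qed.

Lemma fm_elim_sound t s x : all (row_sat x) s -> all (row_sat x) (fm_elim t s).
Proof.
move=> /allP sat_s; apply/allP => l; rewrite mem_cat => /orP[|/allpairsP[[p q] /= []]].
  by rewrite mem_filter => /andP[_]; apply: sat_s.
rewrite !mem_filter => /andP[p_gt0 sp] /andP[q_lt0 sq] ->.
rewrite /row_sat row_lhs_elim_comb row_rhs_elim_comb.
have := sat_s p sp; have := sat_s q sq; rewrite /row_sat; nra.
Qed.

Lemma fm_elim_complete t s x :
  all (row_sat x) (fm_elim t s) -> exists u, all (row_sat (upd x t u)) s.
Proof.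
move=> /allP sat_fm; pose bnd l := x t + (row_rhs l - row_lhs l x) / row_coef l t.
have [|u [lo_u up_u]] := @exists_between _ [seq bnd q | q <- s & row_coef q t < 0]
                                        [seq bnd p | p <- s & 0 < row_coef p t].
  move=> _ _ /mapP[q] /[!mem_filter] /andP[q_lt0 sq] -> /mapP[p] /[!mem_filter] /andP[p_gt0 sp] ->.
  have : row_sat x (elim_comb t p q).
    apply: sat_fm; rewrite mem_cat; apply/orP; right; apply/allpairsP.
    by exists (p, q); rewrite !mem_filter p_gt0 q_lt0 sp sq.
  rewrite /row_sat row_lhs_elim_comb row_rhs_elim_comb /bnd lerD2l.
  rewrite ler_ndivrMr // mulrAC ler_pdivrMr //; nra.
exists u; apply/allP => l sl; rewrite /row_sat row_lhs_upd.
have [l_lt0|l_gt0|l_eq0] := ltrgtP (row_coef l t) 0.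
- have : bnd l <= u by apply: lo_u; apply/mapP; exists l; rewrite ?mem_filter ?l_lt0.
  rewrite /bnd -lerBrDl ler_ndivrMr // mulrC; lra.
- have : u <= bnd l by apply: up_u; apply/mapP; exists l; rewrite ?mem_filter ?l_gt0.
  rewrite /bnd -lerBlDl ler_pdivlMr // mulrC; lra.
- by rewrite l_eq0 mul0r addr0; apply: sat_fm; rewrite mem_cat mem_filter l_eq0 eqxx sl.
Qed.

Lemma row_lhs_on (E : {set T}) l x y :
  (forall t, t \notin E -> row_coef l t = 0) -> {in E, x =1 y} ->
  row_lhs l x = row_lhs l y.
Proof.
move=> l_out xy; apply: eq_bigr => t _.
by have [tE|tE] := boolP (t \in E); [rewrite xy | rewrite l_out // !mul0r].
Qed.

Definition unit_row c : {ffun C -> R} := [ffun c' => (c' == c)%:R].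

Definition unit_rows := [seq unit_row c | c <- enum C].

Lemma unit_rowsP x : all (row_sat x) unit_rows <-> lp_feasible x.
Proof.
have sum_unit_row c (F : C -> R) : \sum_c' unit_row c c' * F c' = F c.
  by under eq_bigr do rewrite ffunE; apply: sum_indicator.
have row_lhs_unit c : row_lhs (unit_row c) x = \sum_t A c t * x t.
  by apply: eq_bigr => t _; rewrite /row_coef sum_unit_row.
split=> [/allP sat_x c | feas_x].
  have := sat_x (unit_row c) (map_f _ (mem_enum _ c)).
  by rewrite /row_sat row_lhs_unit /row_rhs sum_unit_row.
by apply/allP => _ /mapP[c _ ->]; rewrite /row_sat row_lhs_unit /row_rhs sum_unit_row.
Qed.

Lemma unit_rows_ge0 : {in unit_rows, forall l c, 0 <= l c}.
Proof. by move=> _ /mapP[c _ ->] c'; rewrite ffunE ler0n. Qed.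

Lemma fm_elim_ge0 t s : {in s, forall l c, 0 <= l c} -> {in fm_elim t s, forall l c, 0 <= l c}.
Proof.
move=> s_ge0 l; rewrite mem_cat => /orP[|/allpairsP[[p q] /= []]].
  by rewrite mem_filter => /andP[_]; apply: s_ge0.
rewrite !mem_filter => /andP[p_gt0 sp] /andP[q_lt0 sq] -> c; rewrite ffunE.
have := s_ge0 p sp c; have := s_ge0 q sq c; nra.
Qed.

Lemma fm_elim_coef0 (E : {set T}) t s :
  {in s, forall l i, i \notin t |: E -> row_coef l i = 0} ->
  {in fm_elim t s, forall l i, i \notin E -> row_coef l i = 0}.
Proof.
move=> s_out l + i iE; have [->|it] := eqVneq i t.
  rewrite mem_cat => /orP[|/allpairsP[[p q] /= [_ _ ->]]].
    by rewrite mem_filter => /andP[/eqP].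
  by rewrite row_coef_elim_comb mulrC subrr.
have iE' : i \notin t |: E by rewrite !inE negb_or it.
rewrite mem_cat => /orP[|/allpairsP[[p q] /= []]].
  by rewrite mem_filter => /andP[_ sl]; apply: s_out.
rewrite !mem_filter => /andP[_ sp] /andP[_ sq] ->.
by rewrite row_coef_elim_comb (s_out q sq i iE') (s_out p sp i iE') !mulr0 subrr.
Qed.

Lemma fm_project (E : {set T}) : exists s,
  [/\ {in s, forall l c, 0 <= l c},
      {in s, forall l t, t \notin E -> row_coef l t = 0}
    & forall x, all (row_sat x) s <-> exists2 y, {in E, y =1 x} & lp_feasible y].
Proof.
have [n] := ubnP #|~: E|; elim: n E => // n IH E.
have [Efull _|[t]] := set_0Vmem (~: E).
  exists unit_rows; split; [exact: unit_rows_ge0 | | move=> x; split].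
  - by move=> l _ t; rewrite -in_setC Efull inE.
  - by move=> /unit_rowsP feas_x; exists x.
  move=> [y yx /unit_rowsP /allP sat_y]; apply/allP => l sl.
  have := sat_y l sl; rewrite /row_sat (@row_lhs_on E l y x) // => t.
  by rewrite -in_setC Efull inE.
rewrite in_setC => tE card_lt.
have [|s [s_ge0 s_out s_proj]] := IH (t |: E).
  rewrite -ltnS (leq_trans _ card_lt) // ltnS setCU setIC -setDE.
  by rewrite proper_card // properD1 // in_setC.
exists (fm_elim t s); split; [exact: fm_elim_ge0 | exact: fm_elim_coef0 | move=> x; split].
  move=> /fm_elim_complete[u /s_proj[y yx feas_y]]; exists y => // i iE.
  rewrite yx ?inE ?iE ?orbT // /upd; case: eqP => // it.
  by rewrite -it iE in tE.
move=> [y yx feas_y]; have /(fm_elim_sound t) /allP sat_y : all (row_sat y) s.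
  by apply/s_proj; exists y.
apply/allP => l sl; have := sat_y l sl; rewrite /row_sat (@row_lhs_on E l y x) //.
exact: fm_elim_coef0 sl.
Qed.

End FourierMotzkin.

Section Farkas.
Variable R : realFieldType.
Implicit Types T C : finType.

Theorem farkas T C (A : C -> T -> R) (B : C -> R) :
  (exists x, lp_feasible A B x) \/
  exists l : C -> R,
    [/\ forall c, 0 <= l c, forall t, \sum_c l c * A c t = 0 & \sum_c l c * B c < 0].
Proof.
have [s [s_ge0 s_out s_proj]] := fm_project A B set0.
have [/s_proj[y _ feas_y]|/allPn[l sl]] := boolP (all (row_sat A B (fun _ => 0)) s).
  by left; exists y.
rewrite /row_sat /row_lhs big1 => [|t _]; last by rewrite mulr0.
rewrite -ltNge => rhs_lt0; right; exists l; split=> // [c|t]; first exact: s_ge0.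
by apply: s_out; rewrite ?inE.
Qed.

Definition nonneg_rows T C (A : C -> T -> R) (c : C + T) (t : T) : R :=
  match c with inl c => A c t | inr t' => - (t == t')%:R end.

Definition nonneg_rhs T C (B : C -> R) (c : C + T) : R :=
  match c with inl c => B c | inr _ => 0 end.

Lemma nonneg_rows_feasible T C (A : C -> T -> R) (B : C -> R) x :
  lp_feasible (nonneg_rows A) (nonneg_rhs B) x <-> (forall t, 0 <= x t) /\ lp_feasible A B x.
Proof.
split=> [feas_x | [x_ge0 feas_x] [c|t]] //=; last by rewrite sum_indicatorN oppr_le0.
split=> [t|c]; last exact: (feas_x (inl c)).
by rewrite -oppr_le0 -(sum_indicatorN t); apply: (feas_x (inr t)).
Qed.

Theorem farkas_nonneg T C (A : C -> T -> R) (B : C -> R) :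
  (exists2 x, forall t, 0 <= x t & lp_feasible A B x) \/
  exists l : C -> R,
    [/\ forall c, 0 <= l c, forall t, 0 <= \sum_c l c * A c t & \sum_c l c * B c < 0].
Proof.
have [[x /nonneg_rows_feasible[x_ge0 feas_x]]|[l [l_ge0 l_col l_rhs]]] :=
  farkas (nonneg_rows A) (nonneg_rhs B); first by left; exists x.
right; exists (fun c => l (inl c)); split => [c|t|] //.
  have := l_col t; rewrite big_sumType /= sum_indicatorNr.
  by move=> /eqP; rewrite subr_eq0 => /eqP ->.
move: l_rhs; rewrite big_sumType /= [X in _ + X]big1 ?addr0 // => t _.
by rewrite mulr0.
Qed.

Lemma lp_weak_duality T C (A : C -> T -> R) (B : C -> R) (x : T -> R) (l : C -> R) :
  (forall t, 0 <= x t) -> lp_feasible A B x ->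
  (forall c, 0 <= l c) -> (forall t, 0 <= \sum_c l c * A c t) ->
  0 <= \sum_c l c * B c.
Proof.
move=> x_ge0 feas_x l_ge0 l_col.
apply: le_trans (_ : \sum_c l c * \sum_t A c t * x t <= _); last first.
  by apply: ler_sum => c _; rewrite ler_wpM2l.
rewrite (eq_bigr (fun c => \sum_t l c * A c t * x t)) => [|c _]; last first.
  by rewrite mulr_sumr; apply: eq_bigr => t _; rewrite mulrA.
rewrite exchange_big /= sumr_ge0 // => t _; rewrite -mulr_suml mulr_ge0 //.
Qed.

Definition obj_rows T C (A : C -> T -> R) (cobj : T -> R) (c : unit + C) (i : unit + T) : R :=
  match c, i with
  | inl _, inl _ => 1
  | inl _, inr t => - cobj t
  | inr _, inl _ => 0
  | inr c, inr t => A c t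
  end.

Definition obj_rhs C (B : C -> R) (c : unit + C) : R :=
  match c with inl _ => 0 | inr c => B c end.

Lemma obj_rows_feasible T C (A : C -> T -> R) (B : C -> R) (cobj : T -> R) (z : unit + T -> R) :
  lp_feasible (obj_rows A cobj) (obj_rhs B) z <->
  lp_feasible A B (z \o inr) /\ z (inl tt) <= \sum_t cobj t * z (inr t).
Proof.
have sum_unit (F : unit -> R) : \sum_u F u = F tt by rewrite (big_pred1 tt) // => -[].
have row_obj : \sum_i obj_rows A cobj (inl tt) i * z i = z (inl tt) - \sum_t cobj t * z (inr t).
  by rewrite big_sumType sum_unit /= mul1r -sumrN; congr (_ + _); apply: eq_bigr => t _; rewrite mulNr.
have row_res c : \sum_i obj_rows A cobj (inr c) i * z i = \sum_t A c t * z (inr t).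
  by rewrite big_sumType sum_unit /= mul0r add0r.
split=> [feas_z | [feas_z val_z] [[]|c]]; last by rewrite row_res.
  split=> [c|]; first by have := feas_z (inr c); rewrite row_res.
  by have := feas_z (inl tt); rewrite row_obj subr_le0.
by rewrite row_obj subr_le0.
Qed.

Theorem lp_max_attained T C (A : C -> T -> R) (B : C -> R) (cobj : T -> R) :
  (exists x, lp_feasible A B x) ->
  (exists M, forall x, lp_feasible A B x -> \sum_t cobj t * x t <= M) ->
  exists2 x, lp_feasible A B x &
    forall y, lp_feasible A B y -> \sum_t cobj t * y t <= \sum_t cobj t * x t.
Proof.
move=> [x0 feas_x0] [M ubM].
have [s [_ s_out s_proj]] := fm_project (obj_rows A cobj) (obj_rhs B) [set inl tt].
pose attainable t := exists2 x, lp_feasible A B x & t <= \sum_i cobj i * x i.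
pose s1 := [seq (row_coef (obj_rows A cobj) l (inl tt), row_rhs (obj_rhs B) l) | l <- s].
have scalarP t : scalar_sat s1 t <-> attainable t.
  have -> : scalar_sat s1 t = all (row_sat (obj_rows A cobj) (obj_rhs B) (fun _ => t)) s.
    rewrite /scalar_sat all_map; apply: eq_in_all => l sl /=.
    rewrite /row_sat /row_lhs (bigD1 (inl tt)) //= big1 ?addr0 // => i ne_i.
    by rewrite s_out ?mul0r // inE.
  rewrite s_proj; split.
    move=> [z zt /obj_rows_feasible[feas_z val_z]]; exists (z \o inr) => //.
    by rewrite -(zt (inl tt)) ?inE.
  move=> [x feas_x val_x]; exists (fun i => if i is inr t then x t else t).
    by move=> i; rewrite inE => /eqP ->.
  exact/obj_rows_feasible.
have [||tm /scalarP[x feas_x tm_le] tm_max] := @scalar_sat_max _ s1 (\sum_t cobj t * x0 t) M.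
- by apply/scalarP; exists x0.
- by move=> t /scalarP[x feas_x t_le]; apply: le_trans t_le (ubM x feas_x).
exists x => // y feas_y; apply: le_trans tm_le; apply: tm_max; apply/scalarP; by exists y.
Qed.

Corollary lp_max_attained_nonneg T C (A : C -> T -> R) (B : C -> R) (cobj : T -> R) :
  (exists2 x, forall t, 0 <= x t & lp_feasible A B x) ->
  (exists M, forall x, (forall t, 0 <= x t) -> lp_feasible A B x -> \sum_t cobj t * x t <= M) ->
  exists x, [/\ forall t, 0 <= x t, lp_feasible A B x &
    forall y, (forall t, 0 <= y t) -> lp_feasible A B y ->
      \sum_t cobj t * y t <= \sum_t cobj t * x t].
Proof.
move=> [x0 x0_ge0 feas_x0] [M ubM].
have [||x /nonneg_rows_feasible[x_ge0 feas_x] x_max] :=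
  @lp_max_attained _ _ (nonneg_rows A) (nonneg_rhs B) cobj.
- by exists x0; apply/nonneg_rows_feasible.
- by exists M => x /nonneg_rows_feasible[]; apply: ubM.
by exists x; split=> // y y_ge0 feas_y; apply/x_max/nonneg_rows_feasible.
Qed.

End Farkas.

Section LevelSets.
Variables (R : realFieldType) (T : finType).
Implicit Types (w : {set T} -> R) (P S : {set T}).

Definition mass w := \sum_S w S.
Definition marg w (i : T) := \sum_(S : {set T} | i \in S) w S.
Definition marg2 w (i j : T) := \sum_(S : {set T} | (i \in S) && (j \in S)) w S.

Definition point_mass P (d : R) S : R := (S == P)%:R * d.

Lemma mass_point P d : mass (point_mass P d) = d.
Proof. exact: sum_indicator. Qed.

Lemma sum_point_mass (Q : pred {set T}) P d :
  \sum_(S | Q S) point_mass P d S = (Q P)%:R * d.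
Proof.
rewrite big_mkcond /= -(sum_indicator P (fun S => (Q S)%:R * d)).
by apply: eq_bigr => S _; rewrite /point_mass; case: eqP => [->|]; case: (Q _); rewrite ?mul0r ?mul1r ?mulr0.
Qed.

Lemma marg_point P d i : marg (point_mass P d) i = (i \in P)%:R * d.
Proof. exact: sum_point_mass. Qed.

Lemma marg2_point P d i j :
  marg2 (point_mass P d) i j = ((i \in P) && (j \in P))%:R * d.
Proof. exact: sum_point_mass. Qed.

Lemma mass_add w1 w2 : mass (w1 \+ w2) = mass w1 + mass w2.
Proof. exact: big_split. Qed.

Lemma marg_add w1 w2 i : marg (w1 \+ w2) i = marg w1 i + marg w2 i.
Proof. exact: big_split. Qed.

Lemma marg2_add w1 w2 i j : marg2 (w1 \+ w2) i j = marg2 w1 i j + marg2 w2 i j.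
Proof. exact: big_split. Qed.

Lemma marg_bounds w : (forall S, 0 <= w S) ->
  [/\ forall i, 0 <= marg w i, forall i j, 0 <= marg2 w i j, forall i, marg w i <= mass w
    & forall i j, marg2 w i j <= Num.min (marg w i) (marg w j)].
Proof.
move=> w_ge0; have sum_ge0 (Q : pred {set T}) : 0 <= \sum_(S | Q S) w S by exact: sumr_ge0.
split=> [i|i j|i|i j]; rewrite ?sum_ge0 //.
  by rewrite /mass (bigID (fun S => i \in S)) /= lerDl.
rewrite le_min; apply/andP; split.
  by rewrite /marg (bigID (fun S => j \in S) (fun S => i \in S)) /= lerDl.
by rewrite /marg (bigID (fun S => i \in S) (fun S => j \in S)) /= big_andbC lerDl.
Qed.

Lemma level_set_decomposition x0 (x : T -> R) :
  0 <= x0 -> (forall i, 0 <= x i <= x0) ->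
  exists w, [/\ forall S, 0 <= w S, mass w = x0, forall i, marg w i = x i
              & forall i j, marg2 w i j = Num.min (x i) (x j)].
Proof.
have [n] := ubnP #|[set i | 0 < x i]|; elim: n x0 x => // n IH x0 x + x0_ge0 x_bnd.
set P := [set i | 0 < x i] => card_lt.
have x_out i : i \notin P -> x i = 0.
  by rewrite inE -leNgt => x_le0; apply/le_anti; rewrite x_le0; case/andP: (x_bnd i).
have [P0|[j0 Pj0]] := set_0Vmem P.
  exists (point_mass set0 x0); split=> [S||i|i j].
  - by rewrite mulr_ge0 ?ler0n.
  - exact: mass_point.
  - by rewrite marg_point x_out ?P0 inE ?mul0r.
  by rewrite marg2_point !x_out ?P0 ?inE ?mul0r ?minxx.
have [i0 Pi0 i0_min] : exists2 i0, i0 \in P & forall j, j \in P -> x i0 <= x j.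
  by case: (@arg_minP _ R _ j0 (mem P) x Pj0) => i Pi h; exists i.
set d := x i0 in i0_min; have d_gt0 : 0 < d by rewrite inE in Pi0.
pose x' i := if i \in P then x i - d else 0.
have [|||w [w_ge0 w_mass w_marg w_marg2]] := IH (x0 - d) x'.
- have supp_lt : [set i | 0 < x' i] \proper P.
    apply: (@sub_proper_trans _ _ (P :\ i0)); last exact: properD1.
    apply/subsetP => i; rewrite !inE /x'; case: ifP => [Pi|_]; last by rewrite ltxx.
    rewrite subr_gt0 => lt_d; rewrite (lt_trans d_gt0 lt_d) andbT.
    by apply: contraTneq lt_d => ->; rewrite ltxx.
  by apply: leq_trans (proper_card supp_lt) _; rewrite -ltnS.
- by rewrite subr_ge0 (le_trans (i0_min _ Pi0)) //; case/andP: (x_bnd i0).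
- move=> i; rewrite /x'; case: ifP => [Pi|_]; last by rewrite lexx subr_ge0; case/andP: (x_bnd i0).
  by rewrite subr_ge0 i0_min // lerD2r; case/andP: (x_bnd i).
exists (w \+ point_mass P d); split=> [S||i|i j].
- by rewrite /= addr_ge0 // mulr_ge0 ?ler0n ?ltW.
- by rewrite mass_add w_mass mass_point subrK.
- rewrite marg_add w_marg marg_point /x'.
  by case: ifPn => Pi; rewrite ?mul1r ?subrK // mul0r addr0 x_out.
rewrite marg2_add w_marg2 marg2_point /x'.
have ge_d k : k \in P -> 0 <= x k - d by move=> Pk; rewrite subr_ge0 i0_min.
case: ifPn => Pi; case: ifPn => Pj /=; rewrite ?mul1r ?mul0r ?addr0.
- by rewrite -addr_minl !subrK.
- by rewrite (x_out j) // !min_r ?ge_d //; case/andP: (x_bnd i).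
- by rewrite (x_out i) // !min_l ?ge_d //; case/andP: (x_bnd j).
by rewrite (x_out i) ?(x_out j).
Qed.
End LevelSets.

Section Linearization.
Variables (R : rcfType) (N : nat) (vh : 'I_N -> R).
Hypothesis vh_ge0 : forall i, 0 <= vh i.
Implicit Types (w y : {set 'I_N} -> R) (S : {set 'I_N}).

Lemma one_add_Vsum_gt0 S : 0 < 1 + Vsum vh S.
Proof. by rewrite ltr_pwDl // sumr_ge0. Qed.

Lemma exchange_sum_in (F : {set 'I_N} -> 'I_N -> R) :
  \sum_(S : {set 'I_N}) \sum_(i in S) F S i = \sum_i \sum_(S : {set 'I_N} | i \in S) F S i.
Proof. by rewrite (exchange_big_dep xpredT). Qed.

Lemma ucb_sum_linearized (g h : 'I_N -> R) w y :
  (forall S, y S = w S * (1 + Vsum vh S)) ->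
  \sum_(S : {set 'I_N}) \sum_(i in S) g i * (vh i / (1 + Vsum vh S) + h i) * y S =
  \sum_i g i * ((vh i + h i) * marg w i + h i * \sum_j vh j * marg2 w i j).
Proof.
move=> yw; transitivity (\sum_(S : {set 'I_N}) \sum_(i in S)
    (g i * (vh i + h i) * w S + \sum_(j in S) g i * h i * vh j * w S)).
  apply: eq_bigr => S _; apply: eq_bigr => i _; rewrite yw.
  have VS := one_add_Vsum_gt0 S; rewrite -mulr_suml -mulr_sumr -/(Vsum vh S).
  by field; rewrite gt_eqF.
rewrite exchange_sum_in; apply: eq_bigr => i _; rewrite big_split /= [RHS]mulrDr; congr (_ + _).
  by rewrite /marg !mulr_sumr; apply: eq_bigr => S _; rewrite mulrA.
rewrite (exchange_big_dep xpredT) //= /marg2 !mulr_sumr; apply: eq_bigr => j _.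
by rewrite !mulr_sumr; apply: eq_bigr => S _; rewrite !mulrA.
Qed.

Lemma ucb_mass_linearized w y :
  (forall S, y S = w S * (1 + Vsum vh S)) ->
  \sum_(S : {set 'I_N}) y S = mass w + \sum_i vh i * marg w i.
Proof.
move=> yw; under eq_bigr do rewrite yw mulrDr mulr1 /Vsum mulr_sumr.
rewrite big_split /= exchange_sum_in; congr (_ + _).
by apply: eq_bigr => i _; rewrite /marg mulr_sumr; apply: eq_bigr => S _; rewrite mulrC.
Qed.

End Linearization.

Section UcbCompact.
Variables (R : rcfType) (N K : nat) (vh r eps : 'I_N -> R) (a : 'I_N -> 'I_K -> R)
  (c : 'I_K -> R) (om : R).
Hypotheses (vh_ge0 : forall i, 0 <= vh i) (r_ge0 : forall i, 0 <= r i)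
  (a_ge0 : forall i k, 0 <= a i k) (eps_ge0 : forall i, 0 <= eps i)
  (cap_ge0 : forall k, 0 <= (1 - om) * c k).
Implicit Types (w y : {set 'I_N} -> R) (S : {set 'I_N}) (x : 'I_N -> R) (Y : 'I_N -> 'I_N -> R).

Definition ucb_res k y :=
  \sum_(S : {set 'I_N}) \sum_(i in S) a i k * (vh i / (1 + Vsum vh S) - eps i) * y S.

Definition cmp_res x Y k :=
  \sum_i a i k * ((vh i - eps i) * x i - eps i * \sum_j vh j * Y i j).

Definition min_pairs x i j := Num.min (x i) (x j).

Lemma ucb_objE y : ucb_obj vh r eps y = \sum_S ucb_obj_coef vh r eps S * y S.
Proof. by apply: eq_bigr => S _; rewrite mulr_suml. Qed.

Lemma ucb_resE k y : ucb_res k y = \sum_S ucb_res_coef vh eps a k S * y S.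
Proof. by apply: eq_bigr => S _; rewrite mulr_suml. Qed.

Lemma ucb_obj_linearized w y : (forall S, y S = w S * (1 + Vsum vh S)) ->
  ucb_obj vh r eps y = cmp_obj vh r eps (mass w) (marg w) (marg2 w).
Proof. exact: (ucb_sum_linearized vh_ge0). Qed.

Lemma ucb_res_linearized k w y : (forall S, y S = w S * (1 + Vsum vh S)) ->
  ucb_res k y = cmp_res (marg w) (marg2 w) k.
Proof.
move=> yw; rewrite /ucb_res (ucb_sum_linearized vh_ge0 (fun i => a i k) (fun i => - eps i) yw).
by apply: eq_bigr => i _; rewrite mulNr.
Qed.

Lemma cmp_of_ucb y : ucb_feasible vh eps a c om y ->
  exists (x0 : R) x Y, cmp_feasible vh eps a c om x0 x Y /\ cmp_obj vh r eps x0 x Y = ucb_obj vh r eps y.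
Proof.
case=> res_y [sum_y y_ge0]; pose w S := y S / (1 + Vsum vh S).
have yw S : y S = w S * (1 + Vsum vh S).
  by rewrite divfK // gt_eqF // one_add_Vsum_gt0.
have w_ge0 S : 0 <= w S by rewrite divr_ge0 // ltW // one_add_Vsum_gt0.
have [m_ge0 m2_ge0 m_le m2_le] := marg_bounds w_ge0.
exists (mass w), (marg w), (marg2 w); split; last by rewrite (ucb_obj_linearized yw).
split; first exact: m_ge0.
split; first exact: m2_ge0.
split; first by move=> k; have := res_y k; rewrite -/(ucb_res k y) (ucb_res_linearized k yw).
split; first by rewrite -(ucb_mass_linearized yw).
by split; [exact: m_le | exact: m2_le].
Qed.

Lemma cmp_obj_congr (x0 x0' : R) x x' Y Y' : x =1 x' -> (forall i j, Y i j = Y' i j) ->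
  cmp_obj vh r eps x0 x Y = cmp_obj vh r eps x0' x' Y'.
Proof.
move=> xx' YY'; apply: eq_bigr => i _; rewrite xx'.
by congr (_ * (_ + _ * _)); apply: eq_bigr => j _; rewrite YY'.
Qed.

Lemma cmp_res_congr x x' Y Y' k : x =1 x' -> (forall i j, Y i j = Y' i j) ->
  cmp_res x Y k = cmp_res x' Y' k.
Proof.
move=> xx' YY'; apply: eq_bigr => i _; rewrite xx'.
by congr (_ * (_ - _ * _)); apply: eq_bigr => j _; rewrite YY'.
Qed.

Lemma cmp_obj_le (x0 : R) x Y Y' : (forall i j, Y i j <= Y' i j) ->
  cmp_obj vh r eps x0 x Y <= cmp_obj vh r eps x0 x Y'.
Proof.
move=> leY; apply: ler_sum => i _; rewrite ler_wpM2l // lerD2l ler_wpM2l //.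
by apply: ler_sum => j _; rewrite ler_wpM2l.
Qed.

Lemma cmp_res_le x Y Y' k : (forall i j, Y i j <= Y' i j) -> cmp_res x Y' k <= cmp_res x Y k.
Proof.
move=> leY; apply: ler_sum => i _; rewrite ler_wpM2l // lerD2l lerN2 ler_wpM2l //.
by apply: ler_sum => j _; rewrite ler_wpM2l.
Qed.

Lemma ucb_of_cmp_point (x0 : R) x : 0 <= x0 -> (forall i, 0 <= x i <= x0) ->
  exists y, [/\ forall S, 0 <= y S, \sum_S y S = x0 + \sum_i vh i * x i,
    ucb_obj vh r eps y = cmp_obj vh r eps x0 x (min_pairs x)
    & forall k, ucb_res k y = cmp_res x (min_pairs x) k].
Proof.
move=> x0_ge0 x_bnd; have [w [w_ge0 w_mass w_marg w_marg2]] := level_set_decomposition x0_ge0 x_bnd.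
pose y S := w S * (1 + Vsum vh S); have yw S : y S = w S * (1 + Vsum vh S) by [].
exists y; split=> [S|||k].
- by rewrite mulr_ge0 // ltW // one_add_Vsum_gt0.
- rewrite (ucb_mass_linearized yw) w_mass; congr (_ + _).
  by apply: eq_bigr => i _; rewrite w_marg.
- by rewrite (ucb_obj_linearized yw) w_mass; apply: cmp_obj_congr.
by rewrite (ucb_res_linearized k yw); apply: cmp_res_congr.
Qed.

Lemma cmp_feasible_x0_ge0 (x0 : R) x Y : cmp_feasible vh eps a c om x0 x Y -> 0 <= x0.
Proof.
case=> x_ge0 [_ [_ [norm_x [x_le _]]]].
have [i0 _|no_index] := pickP (fun _ : 'I_N => true); first exact: le_trans (x_ge0 i0) (x_le i0).
by move: norm_x; rewrite big_pred0 // addr0 => ->.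
Qed.

Lemma ucb_of_cmp (x0 : R) x Y : cmp_feasible vh eps a c om x0 x Y ->
  exists2 y, ucb_feasible vh eps a c om y & cmp_obj vh r eps x0 x Y <= ucb_obj vh r eps y.
Proof.
move=> feas; have x0_ge0 := cmp_feasible_x0_ge0 feas.
case: feas => x_ge0 [_ [res_x [norm_x [x_le Y_le]]]].
have [|y [y_ge0 y_mass y_obj y_res]] := @ucb_of_cmp_point x0 x x0_ge0.
  by move=> i; rewrite x_ge0 x_le.
exists y; last by rewrite y_obj; apply: cmp_obj_le.
split=> [k|]; first by rewrite -/(ucb_res k y) y_res; apply: le_trans (res_x k); apply: cmp_res_le.
by split; first rewrite y_mass.
Qed.

Definition ucb_rows (cn : 'I_K + bool) S : R :=
  match cn with inl k => ucb_res_coef vh eps a k S | inr b => if b then 1 else -1 end.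

Definition ucb_rhs (cn : 'I_K + bool) : R :=
  match cn with inl k => (1 - om) * c k | inr b => if b then 1 else -1 end.

Lemma ucb_rowsP y :
  ((forall S, 0 <= y S) /\ lp_feasible ucb_rows ucb_rhs y) <-> ucb_feasible vh eps a c om y.
Proof.
have row_mass b : \sum_S ucb_rows (inr b) S * y S = ucb_rhs (inr b) * \sum_S y S.
  by rewrite mulr_sumr.
split=> [[y_ge0 feas_y]|[res_y [mass_y y_ge0]]].
  split=> [k|]; first by rewrite -/(ucb_res k y) ucb_resE; apply: (feas_y (inl k)).
  split=> //; have := feas_y (inr true); have := feas_y (inr false).
  by rewrite !row_mass /=; lra.
split=> // -[k|b] /=; first by rewrite -ucb_resE; apply: res_y.
by rewrite row_mass mass_y mulr1.
Qed.

Lemma ucb_feasible_empty : ucb_feasible vh eps a c om (point_mass set0 1).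
Proof.
split=> [k|]; last by split=> [|S]; [exact: mass_point | rewrite /point_mass mulr1 ler0n].
rewrite -/(ucb_res k _) ucb_resE (bigD1 set0) //= big1 => [|S /negbTE S0]; last first.
  by rewrite /point_mass S0 mul0r mulr0.
by rewrite /ucb_res_coef big_set0 mul0r addr0.
Qed.

Lemma ucb_opt_value_exists : exists v, ucb_opt_value vh r eps a c om v.
Proof.
pose M := \sum_S `|ucb_obj_coef vh r eps S|.
have [||y [y_ge0 feas_y y_max]] :=
  @lp_max_attained_nonneg _ _ _ ucb_rows ucb_rhs (ucb_obj_coef vh r eps).
- by have /ucb_rowsP[] := ucb_feasible_empty; exists (point_mass set0 1).
- exists M => y y_ge0 /(conj y_ge0) /ucb_rowsP[_ [mass_y _]].
  apply: le_trans (_ : \sum_S M * y S <= _); last by rewrite -mulr_sumr mass_y mulr1.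
  apply: ler_sum => S _; rewrite ler_wpM2r // (le_trans (ler_norm _)) //.
  by rewrite /M (bigD1 S) //= lerDl sumr_ge0.
exists (ucb_obj vh r eps y); split; first by exists y; split=> //; apply/ucb_rowsP.
by move=> y' /ucb_rowsP[y'_ge0 feas_y']; rewrite !ucb_objE; apply: y_max.
Qed.

Lemma cmp_opt_value_of_ucb v : ucb_opt_value vh r eps a c om v -> cmp_opt_value vh r eps a c om v.
Proof.
case=> [[y [feas_y <-]] y_max]; split.
  by have [x0 [x [Y [feas obj]]]] := cmp_of_ucb feas_y; exists x0, x, Y.
by move=> x0 x Y /ucb_of_cmp[y' feas_y' le_obj]; apply: le_trans le_obj (y_max _ feas_y').
Qed.

Section Dual.
Variables (lam : 'I_K -> R) (mu : R).

Definition lam_coef i := \sum_k lam k * (a i k * (vh i - eps i)).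
Definition lam_coef2 i j := \sum_k lam k * (a i k * (eps i * vh j)).

Lemma lam_cmp_res x Y :
  \sum_k lam k * cmp_res x Y k = \sum_i (lam_coef i * x i - \sum_j lam_coef2 i j * Y i j).
Proof.
rewrite /cmp_res; under eq_bigr do rewrite mulr_sumr.
rewrite exchange_big /=; apply: eq_bigr => i _.
have -> : \sum_j lam_coef2 i j * Y i j =
          \sum_k \sum_j lam k * (a i k * (eps i * vh j)) * Y i j.
  by rewrite exchange_big /=; apply: eq_bigr => j _; apply: mulr_suml.
rewrite /lam_coef mulr_suml -sumrB; apply: eq_bigr => k _.
have -> : \sum_j lam k * (a i k * (eps i * vh j)) * Y i j =
          lam k * (a i k * (eps i * \sum_j vh j * Y i j)).
  by rewrite !mulr_sumr; apply: eq_bigr => j _; ring.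
ring.
Qed.

Lemma cmp_objE (x0 : R) x Y : cmp_obj vh r eps x0 x Y =
  \sum_i (r i * (vh i + eps i) * x i + \sum_j r i * (eps i * vh j) * Y i j).
Proof.
apply: eq_bigr => i _; rewrite mulrDr mulrA; congr (_ + _).
by rewrite !mulr_sumr; apply: eq_bigr => j _; ring.
Qed.

Local Notation dual_var := ('I_N + ('I_N * 'I_N + 'I_N * 'I_N))%type.
Local Notation dual_con := (bool + ('I_N + 'I_N * 'I_N))%type.

Definition dual_rows (cn : dual_con) (t : dual_var) : R :=
  match cn, t with
  | inl b, inl _ => if b then 1 else -1
  | inr (inl i), inl i' => - (i' == i)%:R
  | inr (inl i), inr (inl p) => (p.1 == i)%:R
  | inr (inl i), inr (inr p) => (p.2 == i)%:R
  | inr (inr p), inr (inl p') => - (p' == p)%:R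
  | inr (inr p), inr (inr p') => - (p' == p)%:R
  | _, _ => 0
  end.

Definition dual_rhs (cn : dual_con) : R :=
  match cn with
  | inl b => if b then mu else - mu
  | inr (inl i) => lam_coef i + mu * vh i - r i * (vh i + eps i)
  | inr (inr p) => - lam_coef2 p.1 p.2 - r p.1 * (eps p.1 * vh p.2)
  end.

Definition dual_vars (al : 'I_N -> R) (be ga : 'I_N -> 'I_N -> R) (t : dual_var) : R :=
  match t with
  | inl i => al i
  | inr (inl p) => be p.1 p.2
  | inr (inr p) => ga p.1 p.2
  end.

Lemma sum_pair (F : 'I_N * 'I_N -> R) : \sum_p F p = \sum_i \sum_j F (i, j).
Proof. by rewrite pair_bigA; apply: eq_bigr => -[]. Qed.

Definition point_x0 (l : dual_con -> R) := l (inl true) - l (inl false).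
Definition point_x (l : dual_con -> R) i := l (inr (inl i)).
Definition point_Y (l : dual_con -> R) i j := l (inr (inr (i, j))).

Lemma dual_cols (l : dual_con -> R) :
  [/\ forall i, \sum_cn l cn * dual_rows cn (inl i) = point_x0 l - point_x l i,
      forall i j, \sum_cn l cn * dual_rows cn (inr (inl (i, j))) = point_x l i - point_Y l i j
    & forall i j, \sum_cn l cn * dual_rows cn (inr (inr (i, j))) = point_x l j - point_Y l i j].
Proof.
have sum0 (T : finType) (F : T -> R) : \sum_t F t * 0 = 0 by apply: big1 => t _; rewrite mulr0.
split=> [i|i j|i j]; rewrite !big_sumType big_bool /= ?sum0 ?mulr0 ?addr0 ?add0r.
- by rewrite mulr1 mulrN1 sum_indicatorNr.
- by rewrite sum_indicatorNr sum_indicatorr.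
by rewrite sum_indicatorNr sum_indicatorr.
Qed.

Lemma dual_rows_sums al be ga : let z := dual_vars al be ga in
  [/\ forall b, \sum_t dual_rows (inl b) t * z t = (if b then 1 else -1) * \sum_i al i,
      forall i, \sum_t dual_rows (inr (inl i)) t * z t =
                - al i + \sum_j be i j + \sum_j ga j i
    & forall i j, \sum_t dual_rows (inr (inr (i, j))) t * z t = - be i j - ga i j].
Proof.
have sum0 (T : finType) (F : T -> R) : \sum_t 0 * F t = 0 by apply: big1 => t _; rewrite mul0r.
split=> [b|i|i j]; rewrite !big_sumType /= ?sum0 ?addr0 ?add0r.
- by rewrite mulr_sumr.
- rewrite sum_indicatorN !sum_pair /= -addrA; congr (_ + (_ + _)).
    by under eq_bigr do rewrite -mulr_sumr; rewrite sum_indicator.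
  by under eq_bigr do rewrite sum_indicator.
by rewrite !sum_indicatorN.
Qed.

Lemma dual_rowsP al be ga :
  cmp_dual_feasible vh r eps a lam mu al be ga <->
  [/\ forall k, 0 <= lam k, forall t, 0 <= dual_vars al be ga t
     & lp_feasible dual_rows dual_rhs (dual_vars al be ga)].
Proof.
have [row_mass row_i row_ij] := dual_rows_sums al be ga.
split=> [[lam_ge0 [al_ge0 [be_ge0 [ga_ge0 [mass_al [dual_i dual_ij]]]]]]|[lam_ge0 z_ge0 feas_z]].
  split=> // [[i|[[i j]|[i j]]]|[[]|[i|[i j]]]]; rewrite ?row_mass ?row_i ?row_ij /=.
  - exact: al_ge0.
  - exact: be_ge0.
  - exact: ga_ge0.
  - by rewrite mul1r; lra.
  - by rewrite mulN1r; lra.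
  - by have := dual_i i; rewrite /lam_coef; lra.
  - by have := dual_ij i j; rewrite /lam_coef2; lra.
split=> //; split=> [i|]; first exact: (z_ge0 (inl i)).
split=> [i j|]; first exact: (z_ge0 (inr (inl (i, j)))).
split=> [i j|]; first exact: (z_ge0 (inr (inr (i, j)))).
have := feas_z (inl true); have := feas_z (inl false); rewrite !row_mass /= mul1r mulN1r.
move=> mass_le mass_ge; split; first lra.
split=> [i|i j]; [have := feas_z (inr (inl i)) | have := feas_z (inr (inr (i, j)))].
  by rewrite row_i /= /lam_coef; lra.
by rewrite row_ij /= /lam_coef2; lra.
Qed.

Lemma dual_value (l : dual_con -> R) :
  \sum_cn l cn * dual_rhs cn =
  mu * (point_x0 l + \sum_i vh i * point_x l i)
  + \sum_k lam k * cmp_res (point_x l) (point_Y l) k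
  - cmp_obj vh r eps (point_x0 l) (point_x l) (point_Y l).
Proof.
rewrite lam_cmp_res cmp_objE !big_sumType big_bool sum_pair /=.
have -> : \sum_i l (inr (inl i)) * (lam_coef i + mu * vh i - r i * (vh i + eps i)) +
    \sum_i \sum_j l (inr (inr (i, j))) * (- lam_coef2 i j - r i * (eps i * vh j)) =
  mu * \sum_i vh i * point_x l i
  + \sum_i (lam_coef i * point_x l i - \sum_j lam_coef2 i j * point_Y l i j)
  - \sum_i (r i * (vh i + eps i) * point_x l i + \sum_j r i * (eps i * vh j) * point_Y l i j).
  rewrite -[in LHS]big_split [in RHS]mulr_sumr -[in RHS]big_split -[in RHS]sumrB /=.
  apply: eq_bigr => i _; rewrite /point_x /point_Y.
  have -> : \sum_j l (inr (inr (i, j))) * (- lam_coef2 i j - r i * (eps i * vh j)) =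
      - \sum_j lam_coef2 i j * l (inr (inr (i, j)))
      - \sum_j r i * (eps i * vh j) * l (inr (inr (i, j))).
    by rewrite -sumrN -sumrB; apply: eq_bigr => j _; ring.
  ring.
rewrite /point_x0; ring.
Qed.


Lemma cmp_weak_duality al be ga (x0 : R) x Y :
  cmp_dual_feasible vh r eps a lam mu al be ga -> 0 <= x0 ->
  (forall i, 0 <= x i) -> (forall i j, 0 <= Y i j) -> (forall i, x i <= x0) ->
  (forall i j, Y i j <= Num.min (x i) (x j)) ->
  cmp_obj vh r eps x0 x Y <= \sum_k lam k * cmp_res x Y k + mu * (x0 + \sum_i vh i * x i).
Proof.
move=> /dual_rowsP[_ z_ge0 feas_z] x0_ge0 x_ge0 Y_ge0 x_le Y_le.
pose l (cn : dual_con) := match cn with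
  | inl b => if b then x0 else 0 | inr (inl i) => x i | inr (inr p) => Y p.1 p.2 end.
have [col_al col_be col_ga] := dual_cols l.
have := lp_weak_duality (l := l) z_ge0 feas_z; rewrite dual_value /point_x0 /= subr0.
have -> : point_x l = x by [].
have -> : point_Y l = Y by [].
move=> weak_duality.
have Y_le_x i j : Y i j <= x i /\ Y i j <= x j by have := Y_le i j; rewrite le_min => /andP.
have : 0 <= mu * (x0 + \sum_i vh i * x i) + \sum_k lam k * cmp_res x Y k - cmp_obj vh r eps x0 x Y.
  apply: weak_duality => [[[]|[i|[i j]]]|[i|[[i j]|[i j]]]] //=.
  - by rewrite col_al subr_ge0 /point_x0 /= subr0.
  - by rewrite col_be subr_ge0; case: (Y_le_x i j).
  by rewrite col_ga subr_ge0; case: (Y_le_x i j).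
lra.
Qed.

Lemma ucb_weak_duality y : ucb_dual_feasible vh r eps a lam mu -> (forall S, 0 <= y S) ->
  ucb_obj vh r eps y <= \sum_k lam k * ucb_res k y + mu * \sum_S y S.
Proof.
case=> _ dual_S y_ge0; rewrite ucb_objE.
apply: le_trans (_ : \sum_S (\sum_k lam k * ucb_res_coef vh eps a k S + mu) * y S <= _).
  by apply: ler_sum => S _; rewrite ler_wpM2r.
have -> : \sum_k lam k * ucb_res k y =
          \sum_S \sum_k lam k * ucb_res_coef vh eps a k S * y S.
  rewrite exchange_big; apply: eq_bigr => k _; rewrite ucb_resE mulr_sumr.
  by apply: eq_bigr => S _; rewrite mulrA.
by rewrite mulr_sumr -big_split; apply: ler_sum => S _; rewrite mulrDl mulr_suml.
Qed.

Lemma ucb_dual_of_cmp_dual al be ga :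
  cmp_dual_feasible vh r eps a lam mu al be ga -> ucb_dual_feasible vh r eps a lam mu.
Proof.
move=> dual; split=> [|S]; first by case: dual.
pose w := point_mass S (1 + Vsum vh S)^-1; pose y S' := w S' * (1 + Vsum vh S').
have yw S' : y S' = w S' * (1 + Vsum vh S') by [].
have w_ge0 S' : 0 <= w S' by rewrite mulr_ge0 ?ler0n // invr_ge0 ltW // one_add_Vsum_gt0.
have sum_y (F : {set 'I_N} -> R) : \sum_S' F S' * y S' = F S.
  rewrite (bigD1 S) //= big1 => [|S' /negbTE neq]; last by rewrite /y /w /point_mass neq !mul0r mulr0.
  by rewrite /y /w /point_mass eqxx mul1r mulVf ?mulr1 ?addr0 // gt_eqF // one_add_Vsum_gt0.
have [m_ge0 m2_ge0 m_le m2_le] := marg_bounds w_ge0.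
have := cmp_weak_duality (x0 := mass w) dual (sumr_ge0 _ (fun S' _ => w_ge0 S')) m_ge0 m2_ge0 m_le m2_le.
rewrite -(ucb_obj_linearized yw) -(ucb_mass_linearized yw) ucb_objE sum_y.
have -> : \sum_S' y S' = 1 by rewrite -(sum_y (fun _ => 1)); apply: eq_bigr => S' _; rewrite mul1r.
rewrite mulr1; under eq_bigr do rewrite -(ucb_res_linearized _ yw) ucb_resE sum_y.
by [].
Qed.

Lemma cmp_dual_of_ucb_dual : ucb_dual_feasible vh r eps a lam mu ->
  exists2 mu', mu' <= mu & exists al be ga, cmp_dual_feasible vh r eps a lam mu' al be ga.
Proof.
move=> dual; have lam_ge0 : forall k, 0 <= lam k by case: dual.
have [i0 _|no_index] := pickP (fun _ : 'I_N => true); last first.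
  exists 0.
    case: dual => _ /(_ set0); rewrite /ucb_obj_coef /ucb_res_coef big_set0.
    by rewrite big1 ?add0r // => k _; rewrite big_set0 mulr0.
  exists (fun _ => 0), (fun _ _ => 0), (fun _ _ => 0).
  do 4 split=> //; split; first by rewrite big1 ?subrr.
  by split=> [i|i j]; have := no_index i.
exists mu => //.
have [[z z_ge0 feas_z]|[l [l_ge0 l_col l_rhs]]] := farkas_nonneg dual_rows dual_rhs.
  exists (fun i => z (inl i)), (fun i j => z (inr (inl (i, j)))), (fun i j => z (inr (inr (i, j)))).
  apply/dual_rowsP; split=> // [t|cn]; first by case: t => [i|[[i j]|[i j]]]; apply: z_ge0.
  by rewrite (eq_bigr (fun t => dual_rows cn t * z t)) => [|[i|[[i j]|[i j]]] _].
exfalso; have [col_al col_be col_ga] := dual_cols l.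
have x_bnd i : 0 <= point_x l i <= point_x0 l.
  rewrite -[X in _ && X]subr_ge0 -col_al l_col andbT.
  exact: l_ge0.
have Y_le i j : point_Y l i j <= Num.min (point_x l i) (point_x l j).
  by rewrite le_min -[X in X && _]subr_ge0 -[X in _ && X]subr_ge0 -col_be -col_ga !l_col.
have x0_ge0 : 0 <= point_x0 l by case/andP: (x_bnd i0) => /le_trans; apply.
have [y [y_ge0 y_mass y_obj y_res]] := ucb_of_cmp_point x0_ge0 x_bnd.
have := ucb_weak_duality dual y_ge0; rewrite y_obj y_mass.
under eq_bigr do rewrite y_res.
have obj_le := cmp_obj_le (point_x0 l) (point_x l) Y_le.
have res_le : \sum_k lam k * cmp_res (point_x l) (min_pairs (point_x l)) k <=
              \sum_k lam k * cmp_res (point_x l) (point_Y l) k.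
  by apply: ler_sum => k _; rewrite ler_wpM2l // cmp_res_le.
move: l_rhs; rewrite dual_value; lra.
Qed.

End Dual.

Lemma dual_optimal_iff lam :
  (exists mu, ucb_dual_optimal vh r eps a c om lam mu) <->
  (exists mu al be ga, cmp_dual_optimal vh r eps a c om lam mu al be ga).
Proof.
split=> [[mu [dual opt]] | [mu [al [be [ga [dual opt]]]]]].
  have [mu' le_mu' [al [be [ga dual']]]] := cmp_dual_of_ucb_dual dual.
  have mu'E : mu' = mu.
    by apply/le_anti; rewrite le_mu' -(lerD2l (\sum_k lam k * ((1 - om) * c k))) opt //;
       apply: ucb_dual_of_cmp_dual dual'.
  rewrite mu'E in dual'; exists mu, al, be, ga; split=> // lam' mu'' al' be' ga' dual''.
  exact: opt (ucb_dual_of_cmp_dual dual'').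
exists mu; split=> [|lam' mu' dual']; first exact: ucb_dual_of_cmp_dual dual.
have [mu'' le_mu'' [al' [be' [ga' dual'']]]] := cmp_dual_of_ucb_dual dual'.
by apply: le_trans (opt _ _ _ _ _ dual'') _; rewrite lerD2l.
Qed.

End UcbCompact.

Lemma eps_of_ge0 (R : rcfType) N (Psi : R) m : 0 <= Psi -> 0 <= eps_of N Psi m.
Proof. by move=> Psi_ge0; rewrite divr_ge0 ?sqrtr_ge0 // mulr_ge0 // addr_ge0 ?sqrtr_ge0. Qed.

Unset Implicit Arguments.

Theorem theorem3 (R : rcfType) (N K : nat)
  (vh r : 'I_N -> R) (a : 'I_N -> 'I_K -> R) (c : 'I_K -> R)
  (om Psi : R) (n : 'I_N -> nat)
  (hvh : forall i, 0 < vh i)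
  (hr : forall i, 0 <= r i <= 1)
  (ha : forall i k, 0 <= a i k <= 1)
  (hc : forall k, 0 < c k)
  (hom : 0 <= om < 1)
  (hn : forall i, (0 < n i)%N)
  (hPsi : 0 < Psi) :
  let eps := fun i => eps_of N Psi (n i) in
  (exists v : R, ucb_opt_value vh r eps a c om v /\ cmp_opt_value vh r eps a c om v)
  /\ (forall lam : 'I_K -> R,
        (exists mu, ucb_dual_optimal vh r eps a c om lam mu)
        <-> (exists mu al be ga, cmp_dual_optimal vh r eps a c om lam mu al be ga)).
Proof.
move=> eps.
have vh_ge0 i : 0 <= vh i by apply: ltW.
have r_ge0 i : 0 <= r i by case/andP: (hr i).
have a_ge0 i k : 0 <= a i k by case/andP: (ha i k).
have eps_ge0 i : 0 <= eps i by apply/eps_of_ge0/ltW.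
have cap_ge0 k : 0 <= (1 - om) * c k.
  by case/andP: hom => _ om_lt1; rewrite mulr_ge0 ?subr_ge0 ?ltW.
split=> [|lam]; last exact: dual_optimal_iff.
have [v ucb_v] : exists v, ucb_opt_value vh r eps a c om v by apply: ucb_opt_value_exists.
by exists v; split=> //; apply: cmp_opt_value_of_ucb.
Qed.
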